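(* Let $X$ be an eventually dendric shift space. For every $k\ge1$ there is an $n\ge1$ such that the following holds: whenever $p,w\in\mathcal L(X)$ with $|p|\le k$ and $|w|\ge n$ are such that both $pw$ and $w$ are left-special, there is a letter $b\in A$ which is the unique letter such that $wb$ is left-special and also the unique letter such that $pwb$ is left-special, and moreover $\ell(pwb)=\ell(pw)$ and $\ell(wb)=\ell(w)$.
   Context: $A$ is a finite alphabet; a shift space is a closed shift-invariant subset $X\subseteq A^{\mathbb Z}$; $\mathcal L(X)$ is its set of finite factors, $\mathcal L_{\ge m}(X)$ its words of length $\ge m$. For $w\in\mathcal L(X)$, $\ell(w)=\mathrm{Card}\{a\in A:aw\in\mathcal L(X)\}$, and $w$ is left-special if $\ell(w)\ge2$. The extension graph $\mathcal E_1(w)$ is the undirected bipartite graph with vertex set the disjoint union of $\{a\in A: aw\in\mathcal L(X)\}$ and $\{b\in A: wb\in\mathcal L(X)\}$ and an edge $(a,b)$ iff $awb\in\mathcal L(X)$. $X$ is eventually dendric if for some $m\ge0$, $\mathcal E_1(w)$ is a tree for every $w\in\mathcal L_{\ge m}(X)$. *)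

From HB Require Import structures.
From mathcomp Require Import all_boot all_order all_algebra.
From Stdlib Require Import ClassicalEpsilon.
Set Implicit Arguments. Unset Strict Implicit. Unset Printing Implicit Defensive.
Import GRing.Theory Num.Theory.

Definition asbool (P : Prop) : bool :=
  if excluded_middle_informative P then true else false.

Section Shift.
Variable A : finType.

Definition config := int -> A.

Definition window (x : config) (i : int) (n : nat) : seq A :=
  [seq x (i + (k%:Z))%R | k <- iota 0 n].

Definition shift (x : config) : config := fun i => x (i + 1)%R.
Definition unshift (x : config) : config := fun i => x (i - 1)%R.

(* X is closed (product topology: cylinders) and shift-invariant (sigma X = X). *)
Definition shift_space (X : config -> Prop) : Prop :=
  [/\ (forall x, X x -> X (shift x)),
      (forall x, X x -> X (unshift x)) &
      (forall x, (forall i n, exists2 y, X y & window y i n = window x i n) -> X x)].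

Definition inL (X : config -> Prop) (w : seq A) : bool :=
  asbool (exists x, exists i, X x /\ window x i (size w) = w).

Definition ell (X : config -> Prop) (w : seq A) : nat :=
  #|[set a : A | inL X (a :: w)]|.

Definition left_special (X : config -> Prop) (w : seq A) : bool := 2 <= ell X w.

(* Extension graph E_1(w): vertices inl a (left copy, a w in L) and
   inr b (right copy, w b in L); undirected edges {inl a, inr b} iff a w b in L. *)
Definition ext_vertex (X : config -> Prop) (w : seq A) (v : A + A) : bool :=
  match v with
  | inl a => inL X (a :: w)
  | inr b => inL X (rcons w b)
  end.

Definition ext_edge (X : config -> Prop) (w : seq A) : rel (A + A) :=
  fun u v =>
    match u, v with
    | inl a, inr b => inL X (a :: rcons w b)
    | inr b, inl a => inL X (a :: rcons w b)
    | _, _ => false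
    end.

Definition is_tree (T : finType) (V : pred T) (e : rel T) : Prop :=
  [/\ (exists v, V v),
      (forall u v, V u -> V v -> connect e u v) &
      (forall c : seq T, all V c -> cycle e c -> uniq c -> size c < 3)].

Definition eventually_dendric (X : config -> Prop) : Prop :=
  exists m : nat, forall w : seq A, inL X w -> m <= size w ->
    is_tree (ext_vertex X w) (ext_edge X w).

End Shift.

(* For a word w whose extension graph is a tree, counting edges gives
   sum_b (ell(wb) - 1) <= ell(w) - 1.  Hence, beyond the dendric threshold, the
   total weight sum_{|v| = n} (ell(v) - 1) is nonincreasing in n, while the number
   of left-special words of length n is nondecreasing (every left-special word
   has a left-special right extension) and bounded by that weight.  Both
   stabilise, so from some length N on every left-special word v has exactly one
   left-special right extension vb, and ell(vb) = ell(v).  A left-special word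
   of length >= N is then the ray obtained from its length-N prefix by repeatedly
   appending this letter.  For each of the finitely many triples (prefix of w,
   prefix of pw, |p|), the ray of pw shifted by |p| either agrees with the ray of
   w forever or already disagrees before some uniform length; for longer w the
   two rays agree forever, in particular on the next letter. *)

From mathcomp Require Import all_boot all_order all_algebra zify.
From Stdlib Require Import Classical ClassicalEpsilon.
Set Implicit Arguments. Unset Strict Implicit. Unset Printing Implicit Defensive.

Lemma asboolP (P : Prop) : asbool P = true <-> P.
Proof. by rewrite /asbool; case: excluded_middle_informative. Qed.

Section Language.
Variables (A : finType) (X : config A -> Prop).

Definition left_ext (v : seq A) : {set A} := [set a | inL X (a :: v)].

Lemma ellE v : ell X v = #|left_ext v|.
Proof. by []. Qed.

Lemma window_cat (x : config A) i n k :
  window x i (n + k) = window x i n ++ window x (i + n%:Z)%R k.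
Proof.
rewrite /window iotaD map_cat add0n; congr (_ ++ _).
rewrite -[n in iota n _]addn0 iotaDl -map_comp; apply: eq_map => j /=.
by rewrite PoszD GRing.addrA.
Qed.

Lemma inL_cat s1 s2 : inL X (s1 ++ s2) -> inL X s1 /\ inL X s2.
Proof.
move/asboolP=> [x [i [Xx]]]; rewrite size_cat window_cat => /eqP.
rewrite eqseq_cat ?size_map ?size_iota // => /andP[/eqP s1E /eqP s2E].
by split; apply/asboolP; exists x; [exists i | exists (i + (size s1)%:Z)%R].
Qed.

Lemma inL_behead a s : inL X (a :: s) -> inL X s.
Proof. by move=> /(@inL_cat [:: a]) []. Qed.

Lemma inL_belast s b : inL X (rcons s b) -> inL X s.
Proof. by rewrite -cats1 => /inL_cat []. Qed.

Lemma inL_cons_belast a s b : inL X (a :: rcons s b) -> inL X (a :: s).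
Proof. by rewrite -rcons_cons; apply: inL_belast. Qed.

Lemma left_ext_rcons_sub s b : left_ext (rcons s b) \subset left_ext s.
Proof. by apply/subsetP=> a; rewrite !inE; apply: inL_cons_belast. Qed.

Lemma ell_rcons_le s b : ell X (rcons s b) <= ell X s.
Proof. exact/subset_leq_card/left_ext_rcons_sub. Qed.

Lemma ell_rcons_notinL s b : ~~ inL X s -> ell X (rcons s b) = 0.
Proof.
move=> Ls; apply/eqP; rewrite cards_eq0; apply/eqP/setP=> a; rewrite !inE.
by apply/negP=> /inL_cons_belast /inL_behead; apply/negP.
Qed.

Lemma left_special_inL s : left_special X s -> inL X s.
Proof. by move=> /ltnW /card_gt0P [a]; rewrite inE => /inL_behead. Qed.

Lemma left_special_belast s b : left_special X (rcons s b) -> left_special X s.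
Proof. by move=> LS; apply: leq_trans LS (ell_rcons_le _ _). Qed.

End Language.

Section MergeLabel.
Variables (T U : finType) (f : T -> U) (N : {set T}) (a0 : T).
Hypothesis Na0 : a0 \in N.

Definition merge_label x := if f x \in f @: N then f a0 else f x.

Lemma merge_labelP x y :
  merge_label x = merge_label y -> f x = f y \/ f x \in f @: N /\ f y \in f @: N.
Proof.
have fNa0 := imset_f f Na0; rewrite /merge_label.
case: ifP => fx; case: ifP => fy fxy; [by right | | | by left].
  by rewrite -fxy fNa0 in fy.
by rewrite fxy fNa0 in fx.
Qed.

Lemma card_merge_label (L : {set T}) : N \subset L -> {in N &, injective f} ->
  #|merge_label @: L| + #|N| = #|f @: L| + 1.
Proof.
move=> NL injf.
have -> : merge_label @: L = f a0 |: (f @: L :\: f @: N).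
  apply/setP => u; rewrite !inE; apply/imsetP/idP => [[x Lx ->]|].
    by rewrite /merge_label; case: ifP => fx; rewrite ?eqxx // fx imset_f ?orbT.
  case/orP => [/eqP ->|/andP[uN /imsetP[x Lx ux]]].
    by exists a0; rewrite /merge_label ?imset_f ?(subsetP NL).
  by exists x; rewrite // /merge_label -ux (negPf uN).
have fNL : f @: N \subset f @: L by apply: imsetS.
have cardN : #|f @: N| = #|N| by apply: card_in_imset.
rewrite cardsU1 cardsD (setIidPr fNL) cardN !inE imset_f //=.
by have := subset_leq_card fNL; rewrite cardN; lia.
Qed.

End MergeLabel.

Section ExtensionTree.
Variables (A : finType) (X : config A -> Prop) (w : seq A).
Local Notation E := (ext_edge X w).
Local Notation V := (ext_vertex X w).

Lemma ext_edge_sym : symmetric E.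
Proof. by case=> [a|b] [a'|b']. Qed.

Lemma ext_edge_vertex u v : E u v -> V v.
Proof.
by case: u v => [a|b] [a'|b'] //= /[dup] /inL_behead ? /inL_cons_belast.
Qed.

Hypothesis tree : is_tree V E.

(* A left vertex whose right neighbours are all leaves is a whole component. *)
Lemma left_ext_unique a :
  a \in left_ext X w ->
  (forall c, a \in left_ext X (rcons w c) -> ell X (rcons w c) <= 1) ->
  forall a', a' \in left_ext X w -> a' = a.
Proof.
rewrite inE => La leaves a'; rewrite inE => La'.
pose near_a (u : A + A) :=
  match u with inl x => x == a | inr c => inL X (a :: rcons w c) end.
have near_closed : closed E near_a.
  apply: intro_closed; first exact/sym_connect_sym/ext_edge_sym.
  move=> [x|c] [y|d] //= edge; rewrite !unfold_in /=; first by move/eqP <-.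
  move=> ac; have le1 : ell X (rcons w c) <= 1 by apply: leaves; rewrite inE.
  by apply/eqP; apply: (card_le1_eqP le1); rewrite inE.
have [_ conn _] := tree.
have := closed_connect near_closed (conn (inl a) (inl a') La La').
by rewrite !unfold_in /= eqxx => /esym/eqP.
Qed.

Lemma left_special_rcons_exists :
  left_special X w -> exists b, left_special X (rcons w b).
Proof.
move=> /card_gt1P [a1 [a2 [L1 L2 a12]]].
apply/existsP; apply: contraNT a12 => /existsPn no_ls.
by apply/eqP; apply: (left_ext_unique L2) L1 => c _; rewrite leqNgt no_ls.
Qed.

Lemma ell_rcons_unique b :
  left_special X (rcons w b) ->
  (forall c, left_special X (rcons w c) -> c = b) ->
  ell X (rcons w b) = ell X w.
Proof.
move=> LSb uniq_b; apply/eqP; rewrite eqn_leq ell_rcons_le /=.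
apply/subset_leq_card/subsetP => a La; apply: contraT => aNb.
have [a1 [_ [Lb1 _ _]]] := card_gt1P LSb.
have a1E : a1 = a.
  apply: (left_ext_unique La) (subsetP (left_ext_rcons_sub X w b) _ Lb1).
  move=> c Lc; rewrite leqNgt; apply: contraNN aNb => LSc.
  by rewrite -(uniq_b c LSc).
by rewrite -a1E Lb1 in aNb.
Qed.

Definition right_in (Bs : seq A) (v : A + A) : bool :=
  if v is inr b then b \in Bs else true.

Definition ext_edge_in (Bs : seq A) : rel (A + A) :=
  fun u v => [&& E u v, right_in Bs u & right_in Bs v].

Lemma ext_edge_in_sym Bs : symmetric (ext_edge_in Bs).
Proof. by move=> u v; rewrite /ext_edge_in ext_edge_sym [right_in _ u && _]andbC. Qed.

Lemma ext_edge_in_cons Bs b : subrel (ext_edge_in Bs) (ext_edge_in (b :: Bs)).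
Proof.
move=> u v /and3P[uv Bu Bv]; rewrite /ext_edge_in uv.
by case: u v {uv} Bu Bv => [?|?] [?|?] //= Bu Bv; rewrite ?inE ?Bu ?Bv ?orbT.
Qed.

(* Otherwise a path between them closes a cycle through [inr b]. *)
Lemma common_neighbours_disconnected Bs b a1 a2 :
  b \notin Bs -> a1 \in left_ext X (rcons w b) -> a2 \in left_ext X (rcons w b) ->
  a1 != a2 -> ~~ connect (ext_edge_in Bs) (inl a1) (inl a2).
Proof.
rewrite !inE => bNB L1 L2 a12; apply/negP => /connectP [p pth lastE].
case: (shortenP pth) lastE => {pth} p' pth uniq_p' _ lastE.
have [_ _ acyclic] := tree.
have in_p' (P : pred (A + A)) : (forall u v, ext_edge_in Bs u v -> P v) -> all P p'.
  move=> PE; elim: p' (inl a1) pth {uniq_p' lastE} => //= v p' IH u /andP[uv pth].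
  by rewrite (PE _ _ uv) (IH _ pth).
have Bp' : all (right_in Bs) p' by apply: in_p' => u v /and3P[].
have Vp' : all V p' by apply: in_p' => u v /and3P[/ext_edge_vertex].
have Ep' : path E (inl a1) p' by apply: sub_path pth => u v /and3P[].
have bNp' : inr b \notin p' by apply: contra bNB => /(allP Bp').
have := acyclic [:: inr b, inl a1 & p'].
rewrite /= Vp' (inL_behead L1) (inL_cons_belast L1) rcons_path Ep' -lastE /= L1 L2.
move: uniq_p'; rewrite /= => ->; rewrite bNp' ltnS ltnNge.
move=> /(_ isT isT isT) /negP; apply.
case: p' {pth in_p' Bp' Vp' Ep' bNp'} lastE => //= -[a2E].
by rewrite a2E eqxx in a12.
Qed.

(* [f] labels the connected components of the left vertices in the subgraph
   of right vertices [Bs]; each right vertex [b] merges [ell (w b)] of them. *)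
Lemma component_labelling Bs : uniq Bs -> exists f : A -> A,
  \sum_(b <- Bs) (ell X (rcons w b)).-1 + #|f @: left_ext X w| = ell X w /\
  {in left_ext X w &, forall x y, f x = f y -> connect (ext_edge_in Bs) (inl x) (inl y)}.
Proof.
elim: Bs => [|b Bs IH] /=.
  exists id; rewrite big_nil add0n imset_id; split=> // x y _ _ ->; exact: connect0.
case/andP => bNB /IH [f [card_f conn_f]].
have sub : subrel (connect (ext_edge_in Bs)) (connect (ext_edge_in (b :: Bs))).
  by apply: connect_sub => u v /ext_edge_in_cons /connect1.
have NbL := left_ext_rcons_sub X w b; set Nb := left_ext X (rcons w b) in NbL *.
have [Nb0|[a0 Na0]] := set_0Vmem Nb.
  exists f; rewrite big_cons ellE -/Nb Nb0 cards0; split=> // x y Lx Ly fxy.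
  exact/sub/conn_f.
have injf : {in Nb &, injective f}.
  move=> x y Nx Ny fxy; apply/eqP/negPn/negP => xy.
  have := common_neighbours_disconnected bNB Nx Ny xy.
  by rewrite conn_f ?(subsetP NbL).
exists (merge_label f Nb a0); split.
  have := card_merge_label Na0 NbL injf; have : 0 < #|Nb| by apply/card_gt0P; exists a0.
  rewrite big_cons ellE -/Nb -card_f; move: (\sum_(_ <- _) _) => S; lia.
move=> x y Lx Ly /(merge_labelP Na0) [fxy|[/imsetP[n1 N1 fx] /imsetP[n2 N2 fy]]].
  exact/sub/conn_f.
have edge n : n \in Nb -> ext_edge_in (b :: Bs) (inl n) (inr b).
  by rewrite inE /ext_edge_in /= mem_head => ->.
apply: connect_trans (sub _ _ (conn_f _ _ Lx (subsetP NbL _ N1) fx)) _.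
apply: connect_trans (connect1 (edge _ N1)) _.
apply: connect_trans (connect1 _) (sub _ _ (conn_f _ _ (subsetP NbL _ N2) Ly (esym fy))).
by rewrite ext_edge_in_sym edge.
Qed.

Lemma sum_ell_rcons_le : \sum_(b : A) (ell X (rcons w b)).-1 <= (ell X w).-1.
Proof.
have [f [card_f _]] := component_labelling (enum_uniq A).
rewrite big_enum /= (eq_bigl predT) in card_f; last by move=> b; rewrite inE.
have [ell0|/card_gt0P [a La]] := posnP (ell X w).
  by move: card_f; rewrite ell0; move: (\sum_(_ | _) _) => S; lia.
have : 0 < #|f @: left_ext X w| by apply/card_gt0P; exists (f a); apply: imset_f.
by move: card_f; move: (\sum_(_ | _) _) => S; lia.
Qed.

End ExtensionTree.

Lemma ltn_sum_seq (T : eqType) (s : seq T) (F G : T -> nat) x :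
  {in s, forall y, F y <= G y} -> x \in s -> F x < G x ->
  \sum_(y <- s) F y < \sum_(y <- s) G y.
Proof.
move=> leFG sx ltx; rewrite !(perm_big _ (perm_to_rem sx)) !big_cons -addSn.
rewrite leq_add // big_seq [leqRHS]big_seq leq_sum // => y /mem_rem; exact: leFG.
Qed.

Lemma eventually_constant (f : nat -> nat) (B : nat) :
  (forall n, f n <= f n.+1) -> (forall n, f n <= B) ->
  exists N, forall n, N <= n -> f n = f N.
Proof.
move=> incr bnd; have mono := homo_leq leqnn leq_trans incr.
suff [N maxN] : exists N, forall n, N <= n -> f n <= f N.
  by exists N => n Nn; apply/eqP; rewrite eqn_leq maxN // mono.
suff gap d N0 : B - f N0 <= d -> exists N, forall n, N <= n -> f n <= f N.
  exact: (gap _ 0 (leqnn _)).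
elim: d N0 => [|d IH] N0 gapN0.
  by exists N0 => n _; apply: leq_trans (bnd n) _; rewrite -subn_eq0 -leqn0.
have [[n [N0n ltN0n]]|noinc] := classic (exists n, N0 <= n /\ f N0 < f n).
  by apply: (IH n); have := bnd n; lia.
exists N0 => n N0n; rewrite leqNgt; apply/negP => ltN0n.
by apply: noinc; exists n.
Qed.

Section Counting.
Variables (A : finType) (X : config A -> Prop) (m : nat).
Hypothesis dendric : forall w : seq A, inL X w -> m <= size w ->
  is_tree (ext_vertex X w) (ext_edge X w).

Fixpoint words n : seq (seq A) :=
  if n is n'.+1 then [seq rcons v b | v <- words n', b <- enum A] else [:: [::]].

Lemma size_words n v : v \in words n -> size v = n.
Proof.
elim: n v => [|n IH] v /=; first by rewrite inE => /eqP->.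
by case/allpairsPdep => [u [b [uw _ ->]]]; rewrite size_rcons (IH _ uw).
Qed.

Lemma mem_words v : v \in words (size v).
Proof.
elim/last_ind: v => [|v b IH]; first by rewrite inE.
rewrite size_rcons; apply: (allpairs_f_dep (fun v b => rcons v b)) IH _.
by rewrite mem_enum.
Qed.

Lemma big_words_rcons n (F : seq A -> nat) :
  \sum_(v <- words n.+1) F v = \sum_(v <- words n) \sum_(b : A) F (rcons v b).
Proof.
rewrite /= big_allpairs_dep; apply: eq_bigr => v _.
by rewrite big_enum; apply: eq_bigl => b; rewrite inE.
Qed.

Definition weight n := \sum_(v <- words n) (ell X v).-1.
Definition count_left_special n := \sum_(v <- words n) (left_special X v : nat).

Lemma dendric_words n v : m <= n -> v \in words n -> inL X v ->
  is_tree (ext_vertex X v) (ext_edge X v).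
Proof. by move=> mn /size_words vn Lv; apply: dendric; rewrite ?vn. Qed.

Lemma weight_succ_le n : m <= n -> weight n.+1 <= weight n.
Proof.
move=> mn; rewrite /weight big_words_rcons big_seq [leqRHS]big_seq.
apply: leq_sum => v vn; have [Lv|Lv] := boolP (inL X v).
  exact/sum_ell_rcons_le/(dendric_words mn vn).
by rewrite big1 // => b _; rewrite ell_rcons_notinL.
Qed.

Lemma weight_le n : m <= n -> weight n <= weight m.
Proof.
move=> /subnKC <-; elim: (n - m) => [|d IH]; first by rewrite addn0.
by rewrite addnS (leq_trans (weight_succ_le _)) ?leq_addr.
Qed.

Lemma count_left_special_le_weight n : count_left_special n <= weight n.
Proof. by apply: leq_sum => v _; rewrite /left_special; case: (ell X v) => [|[]]. Qed.

Lemma left_special_le_ext n v : m <= n -> v \in words n ->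
  left_special X v <= \sum_(b : A) (left_special X (rcons v b) : nat).
Proof.
move=> mn vn; have [LSv|//] := boolP (left_special X v).
have tree := dendric_words mn vn (left_special_inL LSv).
have [b LSb] := left_special_rcons_exists tree LSv.
by rewrite (bigD1 b) //= LSb.
Qed.

Lemma count_left_special_succ n :
  m <= n -> count_left_special n <= count_left_special n.+1.
Proof.
move=> mn; rewrite /count_left_special big_words_rcons big_seq [leqRHS]big_seq.
by apply: leq_sum => v; apply: left_special_le_ext.
Qed.

Lemma eventually_unique_left_special_ext : exists2 N, m <= N &
  forall v, left_special X v -> N <= size v ->
  forall b c, left_special X (rcons v b) -> left_special X (rcons v c) -> b = c.
Proof.
have incr n : count_left_special (m + n) <= count_left_special (m + n.+1).
  by rewrite addnS count_left_special_succ ?leq_addr.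
have bnd n : count_left_special (m + n) <= weight m.
  exact: leq_trans (count_left_special_le_weight _) (weight_le (leq_addr n m)).
have [N constN] := eventually_constant incr bnd.
exists (m + N) => [|v LSv Nv b c LSb LSc]; first exact: leq_addr.
apply/eqP/negPn/negP => bc.
have mv : m <= size v := leq_trans (leq_addr N m) Nv.
have : count_left_special (size v) < count_left_special (size v).+1.
  rewrite /count_left_special big_words_rcons.
  apply: (ltn_sum_seq _ (mem_words v)) => [u un|].
    exact: (left_special_le_ext mv un).
  by rewrite LSv (bigD1 b) //= (bigD1 c) 1?eq_sym //= LSb LSc.
have vE : size v = m + (size v - m) by rewrite subnKC.
by rewrite vE -addnS !constN ?ltnn //; lia.
Qed.

End Counting.

Lemma uniform_stabilization (T : finType) (P : T -> nat -> bool) :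
  (forall x t, P x t.+1 -> P x t) ->
  exists n0, forall x t, n0 <= t -> P x t -> forall t', P x t'.
Proof.
move=> down; have downs x s t : s <= t -> P x t -> P x s.
  by move=> /subnKC <-; elim: (t - s) => [|d IH]; rewrite ?addn0 // addnS => /down.
have /fin_all_exists [fail failP] x : exists t0, (forall t, P x t) \/ ~~ P x t0.
  have [allP|/not_all_ex_not [t0 /negP]] := classic (forall t, P x t).
    by exists 0; left.
  by exists t0; right.
exists (\max_x fail x) => x t maxt Pt.
case: (failP x) => // /negP[]; apply: downs Pt.
exact: leq_trans (leq_bigmax x) maxt.
Qed.

Section Rays.
Variables (A : finType) (X : config A -> Prop) (a0 : A).

(* [a0] is a junk value, used only when [v] has no left-special extension. *)
Definition next_letter v := odflt a0 [pick b | left_special X (rcons v b)].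

Definition ray u t := iter t (fun v => rcons v (next_letter v)) u.

Lemma size_ray u t : size (ray u t) = size u + t.
Proof. by elim: t => [|t IH] /=; rewrite ?addn0 // size_rcons IH addnS. Qed.

Definition rays_agree u1 u2 s t := drop s (ray u2 (t + s)) == ray u1 t.

Lemma rays_agree_pred u1 u2 s t : rays_agree u1 u2 s t.+1 -> rays_agree u1 u2 s t.
Proof.
rewrite /rays_agree addSn /= drop_rcons; last by rewrite size_ray; lia.
by move=> /eqP /rcons_inj [->].
Qed.

Variables (m N : nat).

Definition prefix_tuple v : N.-tuple A := insubd [tuple of nseq N a0] (take N v).

Lemma val_prefix_tuple v : N <= size v -> val (prefix_tuple v) = take N v.
Proof. by move=> Nv; rewrite val_insubd size_takel ?eqxx. Qed.

Hypothesis dendric : forall w : seq A, inL X w -> m <= size w ->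
  is_tree (ext_vertex X w) (ext_edge X w).
Hypothesis mN : m <= N.
Hypothesis uniq_ext : forall v, left_special X v -> N <= size v ->
  forall b c, left_special X (rcons v b) -> left_special X (rcons v c) -> b = c.

Lemma next_letterP v : left_special X v -> N <= size v ->
  forall c, left_special X (rcons v c) <-> c = next_letter v.
Proof.
move=> LSv Nv; have tree := dendric (left_special_inL LSv) (leq_trans mN Nv).
have [b LSb] := left_special_rcons_exists tree LSv.
rewrite /next_letter; case: pickP => [b' LSb'|noLS]; last by rewrite noLS in LSb.
by move=> c; split=> [LSc|->//]; apply: uniq_ext LSc LSb'.
Qed.

Lemma ell_next_letter v : left_special X v -> N <= size v ->
  ell X (rcons v (next_letter v)) = ell X v.
Proof.
move=> LSv Nv; have tree := dendric (left_special_inL LSv) (leq_trans mN Nv).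
apply: (ell_rcons_unique tree) => [|c]; last exact: (next_letterP LSv Nv c).1.
exact: (next_letterP LSv Nv _).2.
Qed.

Lemma ray_take v t : left_special X v -> size v = N + t -> ray (take N v) t = v.
Proof.
elim: t v => [|t IH] v LSv; first by rewrite addn0 => vN; rewrite take_oversize ?vN.
case/lastP: v LSv => [|v c] LSvc; rewrite ?size_rcons addnS // => -[vN].
have LSv := left_special_belast LSvc; have Nv : N <= size v by rewrite vN leq_addr.
rewrite -cats1 takel_cat //= IH // cats1.
by rewrite -((next_letterP LSv Nv c).1 LSvc).
Qed.

Lemma rays_agree_at p w : left_special X (p ++ w) -> left_special X w -> N <= size w ->
  rays_agree (take N w) (take N (p ++ w)) (size p) (size w - N).
Proof.
move=> LSpw LSw Nw; rewrite /rays_agree !ray_take ?drop_size_cat ?size_cat //; lia.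
Qed.

Lemma next_letter_cat p w : left_special X (p ++ w) -> left_special X w -> N <= size w ->
  rays_agree (take N w) (take N (p ++ w)) (size p) (size w - N).+1 ->
  next_letter (p ++ w) = next_letter w.
Proof.
move=> LSpw LSw Nw; rewrite /rays_agree addSn /= !ray_take ?size_cat; [|lia..].
by rewrite drop_rcons ?size_cat ?leq_addr // drop_size_cat // => /eqP /rcons_inj [].
Qed.

End Rays.

Theorem mainTheorem7 (A : finType) (X : config A -> Prop) :
  shift_space X -> eventually_dendric X ->
  forall k : nat, 1 <= k ->
  exists n : nat, 1 <= n /\
    forall p w : seq A, inL X p -> inL X w ->
      size p <= k -> n <= size w ->
      left_special X (p ++ w) -> left_special X w ->
      exists b : A,
        (forall c : A, left_special X (rcons w c) <-> c = b) /\
        (forall c : A, left_special X (rcons (p ++ w) c) <-> c = b) /\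
        ell X (rcons (p ++ w) b) = ell X (p ++ w) /\
        ell X (rcons w b) = ell X w.
Proof.
move=> _ [m dendric] k _.
have [a0 _|A0] := pickP (@predT A); last first.
  by exists 1; split=> // p w _ _ _ _ _ /card_gt1P [a [_ [_ _ _]]]; have := A0 a.
have [N mN uniq_ext] := eventually_unique_left_special_ext dendric.
pose agree (x : N.-tuple A * N.-tuple A * 'I_k.+1) :=
  rays_agree X a0 (val x.1.1) (val x.1.2) x.2.
have [n0 stable] :=
  @uniform_stabilization _ agree (fun x t => @rays_agree_pred _ X a0 _ _ _ t).
exists (N + n0).+1; split=> // p w _ _ pk nw LSpw LSw.
have Nw : N <= size w by lia.
have Npw : N <= size (p ++ w) by rewrite size_cat; lia.
pose x := (prefix_tuple a0 N w, prefix_tuple a0 N (p ++ w), inord (size p) : 'I_k.+1).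
have agreeE t : agree x t = rays_agree X a0 (take N w) (take N (p ++ w)) (size p) t.
  by rewrite /agree /= !val_prefix_tuple // inordK.
have agree_w : agree x (size w - N).
  by rewrite agreeE (rays_agree_at a0 dendric mN uniq_ext LSpw LSw Nw).
have n0t : n0 <= size w - N by lia.
move: (stable x _ n0t agree_w (size w - N).+1); rewrite agreeE.
move=> /(next_letter_cat dendric mN uniq_ext LSpw LSw Nw) next_pw.
exists (next_letter X a0 w); split; [|split; [|split]].
- exact: (next_letterP a0 dendric mN uniq_ext LSw Nw).
- rewrite -next_pw; exact: (next_letterP a0 dendric mN uniq_ext LSpw Npw).
- rewrite -next_pw; exact: (ell_next_letter a0 dendric mN uniq_ext LSpw Npw).
- exact: (ell_next_letter a0 dendric mN uniq_ext LSw Nw).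
Qed.
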